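(* Let $k<n<m<\phi(k)$. Then the value in $U_q^+(\mathfrak{so}_{2n})$ of the bracketed word $[y_k\,x_{n+1}\,x_{n+2}\cdots x_m]$, where $y_k=e[k,n]$, does not depend on the arrangement of the (skew) brackets on the sequence $y_k,x_{n+1},\dots,x_m$.
   Context: Let $\mathbf{k}$ be a field, $G$ an abelian group, $n\ge3$, $X=\{x_1,\dots,x_n\}$, $g_i\in G$, characters $\chi^i:G\to\mathbf{k}^*$, $p_{ij}=\chi^i(g_j)$; for homogeneous $u,v$, $p(u,v)=\chi^u(g_v)$ (replace $x_i$ by $g_i$, resp. $\chi^i$). $G\langle X\rangle$: skew group algebra with $x_ig=\chi^i(g)gx_i$; skew bracket $[u,v]=uv-p(u,v)vu$. Fix $q\in\mathbf{k}^*$, $q\ne-1$; assume $p_{ii}=q$ ($1\le i\le n$), $p_{i,i-1}p_{i-1,i}=q^{-1}$ ($1<i<n$), $p_{n-2,n}p_{n,n-2}=q^{-1}$, $p_{n-1,n}p_{n,n-1}=1$, $p_{ij}p_{ji}=1$ for all other $i<j$ with $j>i+1$. $U_q^+(\mathfrak{so}_{2n})$ is the quotient of $G\langle X\rangle$ by the ideal generated by $[x_i,[x_i,x_{i+1}]]$, $[[x_i,x_{i+1}],x_{i+1}]$ ($1\le i\le n-2$), $[x_{n-2},[x_{n-2},x_n]]$, $[[x_{n-2},x_n],x_n]$, $[x_i,x_j]$ ($1\le i<j\le n-1$, $j>i+1$), $[x_i,x_n]$ ($i\le n-3$), $[x_{n-1},x_n]$. For $n<i<2n$, $x_i:=x_{2n-i}$;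 $\phi(i)=2n-i$. For $k<n$, $e[k,n]$ is the left-normed bracketing $[[\dots[y_1,y_2],\dots],y_r]$ of the letters of the word $e(k,n)$, where $e(k,n)=x_kx_{k+1}\cdots x_{n-2}x_n$ (and $e(n-1,n)=x_n$, unbracketed). *)

From HB Require Import structures.
From mathcomp Require Import all_boot all_order all_algebra.
Set Implicit Arguments. Unset Strict Implicit. Unset Printing Implicit Defensive.
Import GRing.Theory.
Local Open Scope ring_scope.

(* Free algebra k<X> on letters x_1..x_n : a polynomial is a function from
   words (seq nat, letter a stands for x_a) to coefficients; we only ever
   build finitely supported ones. *)
Definition word := seq nat.

Section NC.
Variable K : fieldType.
Definition ncpoly := word -> K.
Definition nc0 : ncpoly := fun _ => 0.
Definition ncadd (f h : ncpoly) : ncpoly := fun w => f w + h w.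
Definition ncscale (c : K) (f : ncpoly) : ncpoly := fun w => c * f w.
Definition ncsub (f h : ncpoly) : ncpoly := ncadd f (ncscale (-1) h).
Definition ncmul (f h : ncpoly) : ncpoly :=
  fun w => \sum_(i < (size w).+1) f (take i w) * h (drop i w).
Definition ncmono (u : word) : ncpoly := fun w => (w == u)%:R.
End NC.

Section Skew.
Variables (K : fieldType) (G : zmodType) (g : nat -> G) (chi : nat -> G -> K).

(* p(u,v) = chi^u(g_v) for words u, v (G written additively) *)
Definition pw (u v : word) : K := \prod_(a <- u) chi a (\sum_(b <- v) g b).

(* homogeneous element together with its degree (word of its letters) *)
Definition hitem := (ncpoly K * word)%type.
Definition xitem (a : nat) : hitem := (ncmono K [:: a], [:: a]).

Definition sbr (x y : hitem) : hitem :=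
  (ncsub (ncmul x.1 y.1) (ncscale (pw x.2 y.2) (ncmul y.1 x.1)), x.2 ++ y.2).

Definition lnb (s : seq hitem) : hitem :=
  match s with [::] => (nc0 K, [::]) | y :: ys => foldl sbr y ys end.

(* x_j for n < j < 2n is x_(2n-j) *)
Definition xlet (n j : nat) : nat := if (j <= n)%N then j else (n.*2 - j)%N.

(* e(k,n) = x_k x_(k+1) ... x_(n-2) x_n, and e[k,n] its left-normed bracketing *)
Definition e_word (k n : nat) : word := rcons (iota k (n.-1 - k)) n.
Definition e_br (k n : nat) : hitem := lnb (map xitem (e_word k n)).

(* arrangements of brackets on a sequence: binary trees whose leaves,
   read left to right, are the positions 0..r-1 *)
Inductive btree := BLeaf of nat | BNode of btree & btree.
Fixpoint frontier (t : btree) : seq nat :=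
  match t with BLeaf i => [:: i] | BNode l r => frontier l ++ frontier r end.
Fixpoint beval (s : seq hitem) (t : btree) : hitem :=
  match t with
  | BLeaf i => nth (nc0 K, [::]) s i
  | BNode l r => sbr (beval s l) (beval s r)
  end.

Definition is_relator (n : nat) (r : ncpoly K) : Prop :=
  (exists i, (1 <= i <= n - 2)%N /\
     (r = (sbr (xitem i) (sbr (xitem i) (xitem i.+1))).1 \/
      r = (sbr (sbr (xitem i) (xitem i.+1)) (xitem i.+1)).1))
  \/ r = (sbr (xitem (n - 2)) (sbr (xitem (n - 2)) (xitem n))).1
  \/ r = (sbr (sbr (xitem (n - 2)) (xitem n)) (xitem n)).1
  \/ (exists i j, (1 <= i)%N /\ (i < j <= n - 1)%N /\ (i.+1 < j)%N /\
        r = (sbr (xitem i) (xitem j)).1)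
  \/ (exists i, (1 <= i <= n - 3)%N /\ r = (sbr (xitem i) (xitem n)).1)
  \/ r = (sbr (xitem (n - 1)) (xitem n)).1.

Definition wordX (n : nat) (u : word) : bool := all (fun a => (0 < a <= n)%N) u.

(* f lies in the two-sided ideal of k<x_1..x_n> generated by the relators:
   f = sum_j c_j u_j r_j v_j with words u_j, v_j and relators r_j *)
Definition in_ideal (n : nat) (f : ncpoly K) : Prop :=
  exists s : seq (K * word * ncpoly K * word),
    foldr (fun t P => [/\ is_relator n t.1.2, wordX n t.1.1.2 & wordX n t.2] /\ P)
      True s /\
    forall w, f w = \sum_(t <- s)
      ncmul (ncmul (ncscale t.1.1.1 (ncmono K t.1.1.2)) t.1.2) (ncmono K t.2) w.

Definition eq_Uq (n : nat) (f h : ncpoly K) : Prop := in_ideal n (ncsub f h).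
End Skew.

(* Call u and v skew commuting when [u,v] = 0 in U_q^+(so_2n).  If the
   non-neighbouring terms of a sequence y_0, ..., y_r pairwise skew commute,
   then every bracketing of it equals the left-normed one, because the twisted
   Jacobi identity gives [[a,b],c] = [a,[b,c]] whenever [a,c] = 0.  Here the
   sequence is e[k,n], x_(n-1), x_(n-2), ..., x_(2n-m).  Letters x_i, x_j with
   |i - j| > 1 skew commute by the defining relations, except for the pair
   x_(n-2), x_n, which does not occur.  That e[k,n] skew commutes with x_j for
   k < j <= n-2 is proved by induction along e[k,n].  The decisive step is
   [[[u,a],b],a] = 0 given [u,b] = [[u,a],a] = [a,[a,b]] = 0: the left side
   equals [[u,[a,b]],a], and an explicit identity writes (1+q)[[u,[a,b]],a]
   in terms of [u,b], [[u,a],a] and [a,[a,b]]; this is where q <> -1 is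
   needed. *)

From HB Require Import structures.
From mathcomp Require Import all_boot all_order all_algebra.
From mathcomp Require Import ring zify.
From Stdlib Require Import FunctionalExtensionality.
Set Implicit Arguments. Unset Strict Implicit. Unset Printing Implicit Defensive.
Import GRing.Theory.
Local Open Scope ring_scope.

Section FreeAlgebra.
Variable K : fieldType.
Implicit Types (f h : ncpoly K) (c : K) (u v w : word).

Lemma ncmul_nil f h : ncmul f h [::] = f [::] * h [::].
Proof. by rewrite /ncmul big_ord_recl big_ord0 addr0. Qed.

Lemma ncmul_cons f h a w :
  ncmul f h (a :: w) = f [::] * h (a :: w) + ncmul (fun v => f (a :: v)) h w.
Proof. by rewrite /ncmul big_ord_recl. Qed.

Lemma ncmulDl f1 f2 h : ncmul (ncadd f1 f2) h = ncadd (ncmul f1 h) (ncmul f2 h).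
Proof.
apply: functional_extensionality => w; rewrite /ncmul /ncadd -big_split.
by apply: eq_bigr => i _; rewrite mulrDl.
Qed.

Lemma ncmulDr f h1 h2 : ncmul f (ncadd h1 h2) = ncadd (ncmul f h1) (ncmul f h2).
Proof.
apply: functional_extensionality => w; rewrite /ncmul /ncadd -big_split.
by apply: eq_bigr => i _; rewrite mulrDr.
Qed.

Lemma ncmulZl c f h : ncmul (ncscale c f) h = ncscale c (ncmul f h).
Proof.
apply: functional_extensionality => w; rewrite /ncmul /ncscale big_distrr.
by apply: eq_bigr => i _; rewrite /= mulrA.
Qed.

Lemma ncmulZr c f h : ncmul f (ncscale c h) = ncscale c (ncmul f h).
Proof.
apply: functional_extensionality => w; rewrite /ncmul /ncscale big_distrr.
by apply: eq_bigr => i _; rewrite /= mulrCA.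
Qed.

Lemma ncmulA f1 f2 f3 : ncmul (ncmul f1 f2) f3 = ncmul f1 (ncmul f2 f3).
Proof.
apply: functional_extensionality => w.
elim: w f1 f2 f3 => [|a w IH] f1 f2 f3; first by rewrite !ncmul_nil mulrA.
rewrite !ncmul_cons ncmul_nil.
have -> : (fun v => ncmul f1 f2 (a :: v)) =
    ncadd (ncscale (f1 [::]) (fun v => f2 (a :: v))) (ncmul (fun v => f1 (a :: v)) f2).
  by apply: functional_extensionality => v; rewrite ncmul_cons.
rewrite ncmulDl ncmulZl /ncadd /ncscale IH; ring.
Qed.

Lemma ncmul_mono_l u h w :
  ncmul (ncmono K u) h w = (take (size u) w == u)%:R * h (drop (size u) w).
Proof.
elim: u w h => [|b u IH] [|a w] h.
- by rewrite ncmul_nil mul1r.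
- rewrite ncmul_cons /ncmono mul1r /ncmul big1 ?addr0 // => i _.
  by rewrite mul0r.
- by rewrite ncmul_nil /ncmono !mul0r.
rewrite ncmul_cons {1}/ncmono mul0r add0r.
have -> : (fun v => ncmono K (b :: u) (a :: v)) = ncscale (a == b)%:R (ncmono K u).
  by apply: functional_extensionality => v; rewrite /ncscale /ncmono eqseq_cons -natrM mulnb.
by rewrite ncmulZl /ncscale IH /= eqseq_cons -mulnb natrM mulrA.
Qed.

Lemma ncmono_mul u v : ncmul (ncmono K u) (ncmono K v) = ncmono K (u ++ v).
Proof.
apply: functional_extensionality => w; rewrite ncmul_mono_l /ncmono -natrM mulnb.
congr (nat_of_bool _)%:R; apply/andP/eqP => [[/eqP Eu /eqP Ev]|->].
  by rewrite -(cat_take_drop (size u) w) Eu Ev.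
by rewrite take_size_cat // drop_size_cat.
Qed.

Lemma ncmul1l h : ncmul (ncmono K [::]) h = h.
Proof.
by apply: functional_extensionality => w; rewrite ncmul_mono_l take0 drop0 mul1r.
Qed.

Lemma ncmul1r h : ncmul h (ncmono K [::]) = h.
Proof.
apply: functional_extensionality => w.
rewrite /ncmul big_ord_recr /= take_size drop_size /ncmono eqxx mulr1 big1 ?add0r //.
move=> i _; suff /negPf-> : drop i w != [::] by rewrite mulr0.
by rewrite -size_eq0 size_drop subn_eq0 -ltnNge.
Qed.

Lemma ncmul_sumr (T : Type) (r : seq T) (F : T -> ncpoly K) f :
  ncmul f (fun w => \sum_(t <- r) F t w) = fun w => \sum_(t <- r) ncmul f (F t) w.
Proof.
apply: functional_extensionality => w; rewrite /ncmul exchange_big /=.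
by apply: eq_bigr => i _; rewrite big_distrr.
Qed.

Lemma ncmul_suml (T : Type) (r : seq T) (F : T -> ncpoly K) f :
  ncmul (fun w => \sum_(t <- r) F t w) f = fun w => \sum_(t <- r) ncmul (F t) f w.
Proof.
apply: functional_extensionality => w; rewrite /ncmul exchange_big /=.
by apply: eq_bigr => i _; rewrite big_distrl.
Qed.

End FreeAlgebra.

Section Ideal.
Variables (K : fieldType) (G : zmodType) (g : nat -> G) (chi : nat -> G -> K) (n : nat).
Implicit Types (f h : ncpoly K) (c : K) (u v : word).

Notation ideal := (in_ideal g chi n).

Definition ideal_term := (K * word * ncpoly K * word)%type.

Definition term_poly (t : ideal_term) : ncpoly K :=
  ncmul (ncmul (ncscale t.1.1.1 (ncmono K t.1.1.2)) t.1.2) (ncmono K t.2).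

Definition term_ok (t : ideal_term) : Prop :=
  [/\ is_relator g chi n t.1.2, wordX n t.1.1.2 & wordX n t.2].

Definition terms_ok (s : seq ideal_term) : Prop := foldr (fun t P => term_ok t /\ P) True s.

Lemma in_idealP f :
  ideal f <-> exists s, terms_ok s /\ f = fun w => \sum_(t <- s) term_poly t w.
Proof.
split=> [[s [ok Ef]]|[s [ok ->]]]; exists s; split => //.
exact: functional_extensionality.
Qed.

Lemma terms_ok_cat s1 s2 : terms_ok s1 -> terms_ok s2 -> terms_ok (s1 ++ s2).
Proof. by elim: s1 => //= t s1 IH [? ?] ?; split => //; apply: IH. Qed.

Lemma terms_ok_map (F : ideal_term -> ideal_term) s :
  (forall t, term_ok t -> term_ok (F t)) -> terms_ok s -> terms_ok (map F s).
Proof. by move=> okF; elim: s => //= t s IH [? ?]; split; [apply: okF | apply: IH]. Qed.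

Lemma in_ideal_map (F : ideal_term -> ideal_term) (T : ncpoly K -> ncpoly K) f :
  (forall t, term_ok t -> term_ok (F t)) ->
  (forall s, T (fun w => \sum_(t <- s) term_poly t w) = fun w => \sum_(t <- s) term_poly (F t) w) ->
  ideal f -> ideal (T f).
Proof.
move=> okF TF /in_idealP [s [ok ->]]; apply/in_idealP; exists (map F s).
rewrite TF; split; first exact: terms_ok_map.
by apply: functional_extensionality => w; rewrite big_map.
Qed.

Lemma in_ideal0 : ideal (nc0 K).
Proof. by exists [::]; split => // w; rewrite big_nil. Qed.

Lemma in_idealD f h : ideal f -> ideal h -> ideal (ncadd f h).
Proof.
move=> /in_idealP [s1 [ok1 ->]] /in_idealP [s2 [ok2 ->]]; apply/in_idealP.
exists (s1 ++ s2); split; first exact: terms_ok_cat.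
by apply: functional_extensionality => w; rewrite big_cat.
Qed.

Lemma in_idealZ c f : ideal f -> ideal (ncscale c f).
Proof.
apply: (in_ideal_map (T := ncscale c) (F := fun t => (c * t.1.1.1, t.1.1.2, t.1.2, t.2))) => // s.
apply: functional_extensionality => w; rewrite /ncscale big_distrr /=.
apply: eq_bigr => t _; rewrite /term_poly /=.
have -> : ncscale (c * t.1.1.1) (ncmono K t.1.1.2) = ncscale c (ncscale t.1.1.1 (ncmono K t.1.1.2)).
  by apply: functional_extensionality => v; rewrite /ncscale mulrA.
by rewrite !ncmulZl.
Qed.

Lemma in_idealB f h : ideal f -> ideal h -> ideal (ncsub f h).
Proof. by move=> If Ih; apply: in_idealD => //; apply: in_idealZ. Qed.

Lemma in_ideal_relator r : is_relator g chi n r -> ideal r.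
Proof.
move=> rel_r; apply/in_idealP; exists [:: (1, [::], r, [::])]; split => //.
apply: functional_extensionality => w; rewrite big_seq1 /term_poly /=.
have -> : ncscale 1 (ncmono K [::]) = ncmono K [::].
  by apply: functional_extensionality => v; rewrite /ncscale mul1r.
by rewrite ncmul1l ncmul1r.
Qed.

Lemma in_ideal_mono_mull u f : wordX n u -> ideal f -> ideal (ncmul (ncmono K u) f).
Proof.
move=> Xu; apply: (in_ideal_map (T := ncmul (ncmono K u))
  (F := fun t => (t.1.1.1, u ++ t.1.1.2, t.1.2, t.2))).
  by move=> t [? ? ?]; split; rewrite // /wordX all_cat; apply/andP.
move=> s; rewrite ncmul_sumr; apply: functional_extensionality => w.
by apply: eq_bigr => t _; rewrite /term_poly /= -!ncmulA ncmulZr ncmono_mul ncmulZl.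
Qed.

Lemma in_ideal_mono_mulr v f : wordX n v -> ideal f -> ideal (ncmul f (ncmono K v)).
Proof.
move=> Xv; apply: (in_ideal_map (T := fun h => ncmul h (ncmono K v))
  (F := fun t => (t.1.1.1, t.1.1.2, t.1.2, t.2 ++ v))).
  by move=> t [? ? ?]; split; rewrite // /wordX all_cat; apply/andP.
move=> s; rewrite ncmul_suml; apply: functional_extensionality => w.
by apply: eq_bigr => t _; rewrite /term_poly /= ncmulA ncmono_mul.
Qed.

(* Elements of [ncpoly] are arbitrary functions on words; the ideal is only
   stable under multiplication by the finitely supported polynomials in
   x_1, ..., x_n collected here. *)
Inductive polyX : ncpoly K -> Prop :=
  | polyX_mono u of wordX n u : polyX (ncmono K u)
  | polyXD f h of polyX f & polyX h : polyX (ncadd f h)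
  | polyXZ c f of polyX f : polyX (ncscale c f).

Lemma polyXB f h : polyX f -> polyX h -> polyX (ncsub f h).
Proof. by move=> Xf Xh; apply: polyXD => //; apply: polyXZ. Qed.

Lemma polyXM f h : polyX f -> polyX h -> polyX (ncmul f h).
Proof.
move=> Xf Xh; elim: Xf => [u Xu||]; last 2 first.
- by move=> f1 f2 _ X1 _ X2; rewrite ncmulDl; apply: polyXD.
- by move=> c f1 _ X1; rewrite ncmulZl; apply: polyXZ.
elim: Xh => [v Xv||].
- by rewrite ncmono_mul; apply: polyX_mono; rewrite /wordX all_cat; apply/andP.
- by move=> h1 h2 _ X1 _ X2; rewrite ncmulDr; apply: polyXD.
- by move=> c h1 _ X1; rewrite ncmulZr; apply: polyXZ.
Qed.

Lemma in_ideal_mull a f : polyX a -> ideal f -> ideal (ncmul a f).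
Proof.
move=> Xa If; elim: Xa => [u Xu||]; first exact: in_ideal_mono_mull.
- by move=> a1 a2 _ I1 _ I2; rewrite ncmulDl; apply: in_idealD.
- by move=> c a1 _ I1; rewrite ncmulZl; apply: in_idealZ.
Qed.

Lemma in_ideal_mulr a f : polyX a -> ideal f -> ideal (ncmul f a).
Proof.
move=> Xa If; elim: Xa => [u Xu||]; first exact: in_ideal_mono_mulr.
- by move=> a1 a2 _ I1 _ I2; rewrite ncmulDr; apply: in_idealD.
- by move=> c a1 _ I1; rewrite ncmulZr; apply: in_idealZ.
Qed.

End Ideal.

Ltac nc_ring :=
  rewrite /sbr /= /ncsub ?(ncmulDl, ncmulDr, ncmulZl, ncmulZr, ncmulA);
  apply: functional_extensionality => ?; cbv [ncadd ncscale nc0]; ring.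

Section SkewBrackets.
Variables (K : fieldType) (G : zmodType) (g : nat -> G) (chi : nat -> G -> K) (n : nat).
Hypothesis chiD : forall i, (1 <= i <= n)%N -> forall a b : G, chi i (a + b) = chi i a * chi i b.

Notation ideal := (in_ideal g chi n).
Notation polyX := (polyX n).
Notation pw := (pw g chi).
Notation sbr := (sbr g chi).
Notation eqU := (eq_Uq g chi n).
Implicit Types (f h : ncpoly K) (x y z : hitem K).

Definition hitemX x : Prop := polyX x.1 /\ wordX n x.2.

Definition skew_commute x y : Prop := ideal (sbr x y).1.

Lemma pw_catl u v w : pw (u ++ v) w = pw u w * pw v w.
Proof. by rewrite /pw big_cat. Qed.

Lemma pw_catr u v w : wordX n u -> pw u (v ++ w) = pw u v * pw u w.
Proof.
elim: u => [|a u IH] /=; first by rewrite /pw !big_nil mulr1.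
move=> /andP [Xa Xu]; rewrite /pw !big_cons -!/(pw u _) IH // big_cat chiD //; ring.
Qed.

Lemma pw_xitem i j : pw [:: i] [:: j] = chi i (g j).
Proof. by rewrite /pw !big_seq1. Qed.

Lemma hitemX_xitem a : (1 <= a <= n)%N -> hitemX (xitem K a).
Proof. by move=> an; split; [apply: polyX_mono|]; rewrite /wordX /= an. Qed.

Lemma hitemX_sbr x y : hitemX x -> hitemX y -> hitemX (sbr x y).
Proof.
move=> [Xx Wx] [Xy Wy]; split; last by rewrite /wordX all_cat; apply/andP.
by apply: polyXB; [|apply: polyXZ]; apply: polyXM.
Qed.

Lemma eq_Uq_refl f : eqU f f.
Proof. rewrite /eq_Uq; have -> : ncsub f f = nc0 K by nc_ring. exact: in_ideal0. Qed.

Lemma eq_Uq_sym f h : eqU f h -> eqU h f.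
Proof.
by rewrite /eq_Uq => /(in_idealZ (-1)); have -> : ncscale (-1) (ncsub f h) = ncsub h f by nc_ring.
Qed.

Lemma eq_Uq_trans f1 f2 f3 : eqU f1 f2 -> eqU f2 f3 -> eqU f1 f3.
Proof.
rewrite /eq_Uq => I12 I23.
have <- : ncadd (ncsub f1 f2) (ncsub f2 f3) = ncsub f1 f3 by nc_ring.
exact: in_idealD.
Qed.

Lemma in_ideal_eq_Uq f h : eqU f h -> ideal h -> ideal f.
Proof.
rewrite /eq_Uq => Ifh Ih.
have <- : ncadd (ncsub f h) h = f by nc_ring.
exact: in_idealD.
Qed.

Lemma in_ideal_sbrl x y : polyX y.1 -> ideal x.1 -> ideal (sbr x y).1.
Proof.
by move=> Xy Ix; apply: in_idealB; [|apply: in_idealZ]; [apply: in_ideal_mulr|apply: in_ideal_mull].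
Qed.

Lemma in_ideal_sbrr x y : polyX x.1 -> ideal y.1 -> ideal (sbr x y).1.
Proof.
by move=> Xx Iy; apply: in_idealB; [|apply: in_idealZ]; [apply: in_ideal_mull|apply: in_ideal_mulr].
Qed.

Lemma eq_Uq_sbrl x x' y : polyX y.1 -> x.2 = x'.2 -> eqU x.1 x'.1 ->
  eqU (sbr x y).1 (sbr x' y).1.
Proof.
rewrite /eq_Uq => Xy Ex Ixx'.
have -> : ncsub (sbr x y).1 (sbr x' y).1 = (sbr (ncsub x.1 x'.1, x.2) y).1.
  by rewrite /= Ex; nc_ring.
exact: in_ideal_sbrl.
Qed.

Lemma eq_Uq_sbrr x y y' : polyX x.1 -> y.2 = y'.2 -> eqU y.1 y'.1 ->
  eqU (sbr x y).1 (sbr x y').1.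
Proof.
rewrite /eq_Uq => Xx Ey Iyy'.
have -> : ncsub (sbr x y).1 (sbr x y').1 = (sbr x (ncsub y.1 y'.1, y.2)).1.
  by rewrite /= Ey; nc_ring.
exact: in_ideal_sbrr.
Qed.

Lemma skew_commuteC x y : pw x.2 y.2 * pw y.2 x.2 = 1 -> skew_commute x y -> skew_commute y x.
Proof.
rewrite /skew_commute => pp1 Ixy.
have -> : (sbr y x).1 = ncscale (- pw y.2 x.2) (sbr x y).1.
  rewrite /= /ncsub ?(ncmulZl, ncmulZr).
  apply: functional_extensionality => w; cbv [ncadd ncscale]; ring: pp1.
exact: in_idealZ.
Qed.

Definition jacobi_defect x y z : ncpoly K :=
  ncsub (ncscale (pw y.2 z.2) (ncmul (sbr x z).1 y.1))
        (ncscale (pw x.2 y.2) (ncmul y.1 (sbr x z).1)).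

Lemma sbr_jacobi x y z : wordX n x.2 ->
  (sbr (sbr x y) z).1 = ncadd (sbr x (sbr y z)).1 (jacobi_defect x y z).
Proof. by move=> Wx; rewrite /jacobi_defect /= !pw_catl !pw_catr //; nc_ring. Qed.

Lemma in_ideal_jacobi_defect x y z : hitemX y -> skew_commute x z -> ideal (jacobi_defect x y z).
Proof.
move=> [Xy _] Ixz.
by apply: in_idealB; apply: in_idealZ; [apply: in_ideal_mulr | apply: in_ideal_mull].
Qed.

Lemma skew_commute_sbrl x y z : hitemX x -> hitemX y ->
  skew_commute x z -> skew_commute y z -> skew_commute (sbr x y) z.
Proof.
move=> [Xx Wx] Hy Cxz Cyz; rewrite /skew_commute sbr_jacobi //.
by apply: in_idealD; [apply: in_ideal_sbrr | apply: in_ideal_jacobi_defect].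
Qed.

Lemma eq_Uq_sbrA x y z : hitemX x -> hitemX y -> skew_commute x z ->
  eqU (sbr (sbr x y) z).1 (sbr x (sbr y z)).1.
Proof.
move=> [_ Wx] Hy Cxz; rewrite /eq_Uq sbr_jacobi //.
have -> : ncsub (ncadd (sbr x (sbr y z)).1 (jacobi_defect x y z)) (sbr x (sbr y z)).1 =
          jacobi_defect x y z by nc_ring.
exact: in_ideal_jacobi_defect.
Qed.

Lemma serre_identity u a b q : wordX n u.2 -> wordX n a.2 -> q != 0 ->
  pw a.2 a.2 = q -> pw a.2 b.2 * pw b.2 a.2 = q^-1 ->
  let E := ncsub (ncscale (pw a.2 b.2) (ncmul (sbr u b).1 a.1))
                 (ncscale (pw u.2 a.2) (ncmul a.1 (sbr u b).1)) in
  ncscale (1 + q) (sbr (sbr u (sbr a b)) a).1 =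
  ncadd (ncsub (ncscale ((pw a.2 b.2)^-1 * pw u.2 a.2 * q) (ncmul a.1 E)) (ncmul E a.1))
        (ncscale (pw a.2 b.2)^-1
           (ncsub (sbr (sbr (sbr u a) a) b).1 (sbr u (sbr a (sbr a b))).1)).
Proof.
move=> Wu Wa q0 paa pab_pba E.
have /andP [pab0 _] : (pw a.2 b.2 != 0) && (pw b.2 a.2 != 0).
  by rewrite -negb_or -mulf_eq0 pab_pba invr_eq0.
have pba : pw b.2 a.2 = q^-1 / pw a.2 b.2 by rewrite -pab_pba mulrC mulKf.
rewrite /E /= !pw_catl !pw_catr // paa pba.
rewrite /sbr /= /ncsub ?(ncmulDl, ncmulDr, ncmulZl, ncmulZr, ncmulA).
by apply: functional_extensionality => w; cbv [ncadd ncscale]; field; apply/andP.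
Qed.

Lemma skew_commute_serre u a b q : hitemX u -> hitemX a -> hitemX b ->
  q != 0 -> 1 + q != 0 -> pw a.2 a.2 = q -> pw a.2 b.2 * pw b.2 a.2 = q^-1 ->
  skew_commute u b -> skew_commute (sbr u a) a -> skew_commute a (sbr a b) ->
  skew_commute (sbr (sbr u a) b) a.
Proof.
move=> Hu Ha Hb q0 q1 paa pab_pba Cub Cuaa Caab.
have [Xu Wu] := Hu; have [Xa Wa] := Ha; have [Xb Wb] := Hb.
rewrite /skew_commute.
apply: (in_ideal_eq_Uq (h := (sbr (sbr u (sbr a b)) a).1)).
  by apply: eq_Uq_sbrl => //; [rewrite /= catA | apply: eq_Uq_sbrA].
have -> : (sbr (sbr u (sbr a b)) a).1 =
    ncscale (1 + q)^-1 (ncscale (1 + q) (sbr (sbr u (sbr a b)) a).1).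
  by apply: functional_extensionality => w; rewrite /ncscale mulKf.
rewrite (serre_identity Wu Wa q0 paa pab_pba).
apply/in_idealZ/in_idealD; last first.
  by apply/in_idealZ/in_idealB; [apply: in_ideal_sbrl | apply: in_ideal_sbrr].
have IE : ideal (ncsub (ncscale (pw a.2 b.2) (ncmul (sbr u b).1 a.1))
                       (ncscale (pw u.2 a.2) (ncmul a.1 (sbr u b).1))).
  by apply: in_idealB; apply: in_idealZ; [apply: in_ideal_mulr | apply: in_ideal_mull].
by apply: in_idealB; [apply: in_idealZ; apply: in_ideal_mull | apply: in_ideal_mulr].
Qed.

End SkewBrackets.

Fixpoint lntree (a i : nat) : btree :=
  if i is i'.+1 then BNode (lntree a i') (BLeaf (a + i)) else BLeaf a.

Lemma frontier_lntree a i : frontier (lntree a i) = iota a i.+1.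
Proof. by elim: i => [|i IH] //; rewrite -[i.+2]addn1 iotaD -IH. Qed.

Lemma size_frontier_gt0 t : (0 < size (frontier t))%N.
Proof. by elim: t => //= l IHl r _; rewrite size_cat addn_gt0 IHl. Qed.

Lemma cat_eq_iota (s1 s2 : seq nat) a N : s1 ++ s2 = iota a N ->
  s1 = iota a (size s1) /\ s2 = iota (a + size s1) (size s2).
Proof.
move=> E; have EN : N = (size s1 + size s2)%N by rewrite -size_cat E size_iota.
move: E; rewrite EN iotaD => /eqP; rewrite eqseq_cat ?size_iota // => /andP [/eqP -> /eqP ->].
by rewrite !size_iota.
Qed.

Section Bracketings.
Variables (K : fieldType) (G : zmodType) (g : nat -> G) (chi : nat -> G -> K) (n : nat).
Hypothesis chiD : forall i, (1 <= i <= n)%N -> forall a b : G, chi i (a + b) = chi i a * chi i b.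
Variable s : seq (hitem K).

Notation S i := (nth (nc0 K, [::]) s i).
Notation beval := (beval g chi s).
Notation sbr := (sbr g chi).
Notation eqU := (eq_Uq g chi n).
Notation hitemX := (hitemX n).
Notation skew_commute := (skew_commute g chi n).

Hypothesis s_hitemX : forall i, (i < size s)%N -> hitemX (S i).
Hypothesis s_skew_commute : forall i j, (i.+1 < j < size s)%N -> skew_commute (S i) (S j).

Lemma beval_deg t : (beval t).2 = flatten [seq (S i).2 | i <- frontier t].
Proof. by elim: t => [i|l IHl r IHr] /=; rewrite ?cats0 // IHl IHr map_cat flatten_cat. Qed.

Lemma hitemX_beval t : all (fun i => i < size s)%N (frontier t) -> hitemX (beval t).
Proof.
elim: t => [i|l IHl r IHr] /=; first by rewrite andbT; apply: s_hitemX.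
by rewrite all_cat => /andP [Hl Hr]; apply: hitemX_sbr; [apply: IHl | apply: IHr].
Qed.

Lemma hitemX_beval_iota t a i : frontier t = iota a i.+1 -> (a + i < size s)%N -> hitemX (beval t).
Proof.
move=> Ft lt_s; apply: hitemX_beval; rewrite Ft; apply/allP => j.
by rewrite mem_iota => /andP [_ ?]; lia.
Qed.

Lemma skew_commute_beval t c : all (fun i => i.+1 < c)%N (frontier t) -> (c < size s)%N ->
  skew_commute (beval t) (S c).
Proof.
move=> lt_c lt_s; have lt_size : all (fun i => i < size s)%N (frontier t).
  by apply: sub_all lt_c => i /= ?; lia.
elim: t lt_c lt_size => [i|l IHl r IHr] /=.
  by rewrite !andbT => ? _; apply: s_skew_commute; lia.
rewrite !all_cat => /andP [cl cr] /andP [sl sr].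
by apply: (skew_commute_sbrl chiD); [apply: hitemX_beval..|apply: IHl|apply: IHr].
Qed.

Lemma beval_deg_eq t t' : frontier t = frontier t' -> (beval t).2 = (beval t').2.
Proof. by rewrite !beval_deg => ->. Qed.

Lemma frontier_lntree_join a i j :
  frontier (BNode (lntree a i) (lntree (a + i.+1) j)) = frontier (lntree a (i.+1 + j)).
Proof. by rewrite [LHS]/= !frontier_lntree -iotaD addnS. Qed.

Lemma eq_Uq_lntree_join a i j : (a + i.+1 + j < size s)%N ->
  eqU (beval (BNode (lntree a i) (lntree (a + i.+1) j))).1 (beval (lntree a (i.+1 + j))).1.
Proof.
elim: j => [|j IH] lt_s; first by rewrite addn0; apply: eq_Uq_refl.
set L := lntree a i; set R := lntree (a + i.+1) j; set c := (a + i.+1 + j.+1)%N.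
have -> : lntree a (i.+1 + j.+1) = BNode (lntree a (i.+1 + j)) (BLeaf c).
  by rewrite addnS /=; congr (BNode _ (BLeaf _)); rewrite /c; lia.
have XL : hitemX (beval L) by apply: (hitemX_beval_iota (frontier_lntree a i)); lia.
have XR : hitemX (beval R) by apply: (hitemX_beval_iota (frontier_lntree _ j)); lia.
apply: (eq_Uq_trans (f2 := (sbr (beval (BNode L R)) (S c)).1)).
  apply/eq_Uq_sym/(eq_Uq_sbrA chiD) => //; apply: skew_commute_beval => //.
  by rewrite frontier_lntree; apply/allP => k; rewrite mem_iota => /andP [_ ?]; lia.
apply: (eq_Uq_sbrl (x' := beval (lntree a (i.+1 + j)))); first by case: (s_hitemX lt_s).
  by apply: beval_deg_eq; apply: frontier_lntree_join.
by apply: IH; lia.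
Qed.

Lemma eq_Uq_beval_lntree t a i : frontier t = iota a i.+1 -> (a + i < size s)%N ->
  eqU (beval t).1 (beval (lntree a i)).1.
Proof.
elim: t a i => [j|l IHl r IHr] a i.
  by case: i => [[->] _|i [_ /(congr1 size)]] //; apply: eq_Uq_refl.
move=> Ft lt_s; have [Fl Fr] := cat_eq_iota (Ft : frontier l ++ frontier r = _).
have [p Ep] : exists p, size (frontier l) = p.+1.
  by exists (size (frontier l)).-1; rewrite prednK // size_frontier_gt0.
have [q Eq] : exists q, size (frontier r) = q.+1.
  by exists (size (frontier r)).-1; rewrite prednK // size_frontier_gt0.
have Ei : i = (p.+1 + q)%N.
  by move: (congr1 size Ft); rewrite /= size_cat size_iota Ep Eq; lia.
rewrite Ep in Fl Fr; rewrite Eq in Fr; subst i.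
have Xr : hitemX (beval r) by apply: (hitemX_beval_iota Fr); lia.
have Xlp : hitemX (beval (lntree a p)) by apply: (hitemX_beval_iota (frontier_lntree a p)); lia.
apply: (eq_Uq_trans (f2 := (sbr (beval (lntree a p)) (beval r)).1)).
  apply: eq_Uq_sbrl; first by case: Xr.
    by apply: beval_deg_eq; rewrite Fl frontier_lntree.
  by apply: IHl => //; lia.
apply: (eq_Uq_trans (f2 := (beval (BNode (lntree a p) (lntree (a + p.+1) q))).1)).
  apply: eq_Uq_sbrr; first by case: Xlp.
    by apply: beval_deg_eq; rewrite Fr frontier_lntree.
  by apply: IHr => //; lia.
by apply: eq_Uq_lntree_join; lia.
Qed.

Theorem eq_Uq_bracketings t1 t2 :
  frontier t1 = iota 0 (size s) -> frontier t2 = iota 0 (size s) ->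
  eqU (beval t1).1 (beval t2).1.
Proof.
case Es: (size s) => [|N] F1 F2; first by move: (size_frontier_gt0 t1); rewrite F1.
apply: (eq_Uq_trans (f2 := (beval (lntree 0 N)).1)); last apply: eq_Uq_sym.
  by apply: eq_Uq_beval_lntree; rewrite ?Es.
by apply: eq_Uq_beval_lntree; rewrite ?Es.
Qed.

End Bracketings.

Section SoRelations.
Variables (K : fieldType) (G : zmodType) (g : nat -> G) (chi : nat -> G -> K) (n : nat).
Hypothesis chiD : forall i, (1 <= i <= n)%N -> forall a b : G, chi i (a + b) = chi i a * chi i b.
Hypothesis chi_far : forall i j, (1 <= i)%N -> (i.+1 < j <= n)%N -> (i, j) <> ((n - 2)%N, n) ->
  chi i (g j) * chi j (g i) = 1.

Notation X := (xitem K).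
Notation sbr := (sbr g chi).
Notation hitemX := (hitemX n).
Notation skew_commute := (skew_commute g chi n).

Lemma skew_commute_serre_l i : (1 <= i <= n - 2)%N -> skew_commute (X i) (sbr (X i) (X i.+1)).
Proof. by move=> ?; apply: in_ideal_relator; left; exists i; split => //; left. Qed.

Lemma skew_commute_serre_r i : (1 <= i <= n - 2)%N -> skew_commute (sbr (X i) (X i.+1)) (X i.+1).
Proof. by move=> ?; apply: in_ideal_relator; left; exists i; split => //; right. Qed.

Lemma skew_commute_serre_fork : skew_commute (X (n - 2)) (sbr (X (n - 2)) (X n)).
Proof. by apply: in_ideal_relator; right; left. Qed.

Lemma skew_commute_far i j : (1 <= i)%N -> (i.+1 < j <= n)%N -> (i, j) <> ((n - 2)%N, n) ->
  skew_commute (X i) (X j).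
Proof.
move=> i_ge1 ij ij_fork; apply: in_ideal_relator; right; right; right.
have [->|j_neq_n] := eqVneq j n.
  right; left; exists i; split => //; apply/andP; split => //.
  by apply/negP => ?; apply: ij_fork; congr pair; lia.
by move/eqP: j_neq_n => j_neq_n; left; exists i, j; do !split => //; lia.
Qed.

Lemma skew_commute_far_rev i j : (1 <= i)%N -> (i.+1 < j <= n)%N -> (i, j) <> ((n - 2)%N, n) ->
  skew_commute (X j) (X i).
Proof.
by move=> *; apply: skew_commuteC; [rewrite !pw_xitem; apply: chi_far | apply: skew_commute_far].
Qed.

Section LeftNormed.
Variable k : nat.
Hypothesis k_ge1 : (1 <= k)%N.

Fixpoint xbr i : hitem K := if i is i'.+1 then sbr (xbr i') (X (k + i)) else X k.

Lemma hitemX_xbr i : (k + i <= n)%N -> hitemX (xbr i).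
Proof.
elim: i => [|i IH] ?; first by apply: hitemX_xitem; lia.
by apply: hitemX_sbr; [apply: IH | apply: hitemX_xitem]; lia.
Qed.

Lemma skew_commute_xbr_far i b : (k + i.+2 <= b <= n)%N -> (b = n -> k + i < n - 2)%N ->
  skew_commute (xbr i) (X b).
Proof.
have far j : (1 <= j)%N -> (j.+1 < b <= n)%N -> (b = n -> j < n - 2)%N -> skew_commute (X j) (X b).
  by move=> j1 jb jbn; apply: skew_commute_far => // -[? ?]; subst; have := jbn erefl; lia.
elim: i => [|i IH] ib bn; first by apply: far; [lia | lia | move=> /bn; lia].
apply: (skew_commute_sbrl chiD); [apply: hitemX_xbr; lia | apply: hitemX_xitem; lia | |].
  by apply: IH; [lia | move=> /bn; lia].
by apply: far; [lia | lia | move=> /bn; lia].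
Qed.

Lemma skew_commute_xbr_last i : (k + i.+1 <= n - 2)%N -> skew_commute (xbr i.+1) (X (k + i.+1)).
Proof.
case: i => [|i] lt_n; first by rewrite /= addn1; apply: skew_commute_serre_r; lia.
set c := (k + i.+2)%N; rewrite [xbr _]/= -/c [xbr _]/= -/c.
have Hu : hitemX (xbr i) by apply: hitemX_xbr; lia.
have [Ha Hc] : hitemX (X (k + i.+1)) /\ hitemX (X c) by split; apply: hitemX_xitem; lia.
apply: (in_ideal_eq_Uq (h := (sbr (sbr (xbr i) (sbr (X (k + i.+1)) (X c))) (X c)).1)).
  apply: eq_Uq_sbrl; [by case: Hc | by rewrite /= -catA | apply: (eq_Uq_sbrA chiD) => //].
  by apply: skew_commute_xbr_far; lia.
apply: (in_ideal_eq_Uq (h := (sbr (xbr i) (sbr (sbr (X (k + i.+1)) (X c)) (X c))).1)).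
  apply: (eq_Uq_sbrA chiD) => //; first exact: hitemX_sbr.
  by apply: skew_commute_xbr_far; lia.
apply: in_ideal_sbrr; first by case: Hu.
have -> : c = (k + i.+1).+1 by rewrite /c addnS.
by apply: skew_commute_serre_r; lia.
Qed.

Lemma lnb_xbr i : lnb g chi (map X (iota k i.+1)) = xbr i.
Proof.
elim: i => // i IH; rewrite -[i.+2]addn1 iotaD map_cat /= foldl_cat.
by move: IH => /= ->.
Qed.

Lemma e_br_xbr : (k <= n - 2)%N -> e_br g chi k n = sbr (xbr (n - 2 - k)) (X n).
Proof.
move=> kn; rewrite /e_br /e_word map_rcons -lnb_xbr.
have -> : (n.-1 - k)%N = (n - 2 - k).+1 by lia.
by rewrite /= foldl_rcons.
Qed.

Lemma hitemX_e_br : (k <= n - 2)%N -> hitemX (e_br g chi k n).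
Proof.
move=> kn; rewrite e_br_xbr //.
by apply: hitemX_sbr; [apply: hitemX_xbr | apply: hitemX_xitem]; lia.
Qed.

Section Serre.
Variable q : K.
Hypothesis q_neq0 : q != 0.
Hypothesis q_neqN1 : q != -1.
Hypothesis chi_diag : forall i, (1 <= i <= n)%N -> chi i (g i) = q.
Hypothesis chi_adj : forall i, (1 < i < n)%N -> chi i (g i.-1) * chi i.-1 (g i) = q^-1.
Hypothesis chi_fork : chi (n - 2)%N (g n) * chi n (g (n - 2)%N) = q^-1.

Lemma addq1_neq0 : 1 + q != 0.
Proof. by rewrite addrC addr_eq0. Qed.

Lemma skew_commute_xbr_inner a j : (k < j < k + a)%N -> (k + a <= n - 2)%N ->
  skew_commute (xbr a) (X j).
Proof.
elim: a j => [|a IH] j ja an; first lia.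
have Xa : hitemX (X (k + a.+1)) by apply: hitemX_xitem; lia.
have [lt_j|ge_j] := ltnP j (k + a).
  apply: (skew_commute_sbrl chiD); [apply: hitemX_xbr; lia | exact: Xa | apply: IH; lia |].
  by apply: skew_commute_far_rev => [||[]]; lia.
case: a IH ja an Xa ge_j => [|a] _ ja an Xa ge_j; first lia.
have -> : j = (k + a.+1)%N by lia.
have -> : xbr a.+2 = sbr (sbr (xbr a) (X (k + a.+1))) (X (k + a.+1).+1) by rewrite /= -addnS.
apply: (skew_commute_serre chiD (q := q)) => //.
- by apply: hitemX_xbr; lia.
- by apply: hitemX_xitem; lia.
- by apply: hitemX_xitem; lia.
- exact: addq1_neq0.
- by rewrite pw_xitem chi_diag //; lia.
- by rewrite !pw_xitem mulrC (chi_adj (i := (k + a.+1).+1)) //; lia.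
- by apply: skew_commute_xbr_far; lia.
- by apply: skew_commute_xbr_last; lia.
- by apply: skew_commute_serre_l; lia.
Qed.

Lemma skew_commute_e_br j : (k < j <= n - 2)%N -> skew_commute (e_br g chi k n) (X j).
Proof.
move=> kjn; have kn : (k <= n - 2)%N by lia.
have Xn : hitemX (X n) by apply: hitemX_xitem; lia.
rewrite e_br_xbr //; have [lt_j|ge_j] := ltnP j (n - 2).
  apply: (skew_commute_sbrl chiD); [apply: hitemX_xbr; lia | exact: Xn | |].
    by apply: skew_commute_xbr_inner; lia.
  by apply: skew_commute_far_rev => [||[]]; lia.
have -> : j = (n - 2)%N by lia.
have E : (k + (n - 3 - k).+1)%N = (n - 2)%N by lia.
have -> : xbr (n - 2 - k) = sbr (xbr (n - 3 - k)) (X (n - 2)).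
  have -> : (n - 2 - k)%N = (n - 3 - k).+1 by lia.
  by rewrite /= E.
apply: (skew_commute_serre chiD (q := q)) => //.
- by apply: hitemX_xbr; lia.
- by apply: hitemX_xitem; lia.
- exact: addq1_neq0.
- by rewrite pw_xitem chi_diag //; lia.
- by rewrite !pw_xitem chi_fork.
- by apply: skew_commute_xbr_far; lia.
- by have := skew_commute_xbr_last (i := n - 3 - k); rewrite /= E; apply; lia.
- exact: skew_commute_serre_fork.
Qed.

End Serre.
End LeftNormed.
End SoRelations.

Theorem lemma6p4 (K : fieldType) (G : zmodType) (g : nat -> G)
    (chi : nat -> G -> K) (q : K) (n k m : nat) :
  (3 <= n)%N ->
  (forall i, (1 <= i <= n)%N -> forall a b : G, chi i (a + b) = chi i a * chi i b) ->
  (forall i, (1 <= i <= n)%N -> forall a : G, chi i a != 0) ->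
  q != 0 -> q != -1 ->
  let p i j := chi i (g j) in
  (forall i, (1 <= i <= n)%N -> p i i = q) ->
  (forall i, (1 < i < n)%N -> p i i.-1 * p i.-1 i = q^-1) ->
  p (n - 2)%N n * p n (n - 2)%N = q^-1 ->
  p (n - 1)%N n * p n (n - 1)%N = 1 ->
  (forall i j, (1 <= i)%N -> (i.+1 < j <= n)%N -> (i, j) <> ((n - 2)%N, n) ->
     p i j * p j i = 1) ->
  (1 <= k)%N -> (k < n)%N -> (n < m)%N -> (m < n.*2 - k)%N ->
  let s := e_br g chi k n
           :: map (fun j => xitem K (xlet n j)) (iota n.+1 (m - n)) in
  forall t1 t2 : btree,
    frontier t1 = iota 0 (size s) -> frontier t2 = iota 0 (size s) ->
    eq_Uq g chi n (beval g chi s t1).1 (beval g chi s t2).1.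
Proof.
move=> _ chiD _ q0 qN1 p diag adj fork _ far k1 kn nm mk s t1 t2 F1 F2.
have sS i : (i < m - n)%N -> nth (nc0 K, [::]) s i.+1 = xitem K (n - i.+1).
  move=> lt_i; rewrite /= (nth_map 0%N) ?size_iota // nth_iota // /xlet.
  by rewrite leqNgt ltnS leq_addr /=; congr xitem; lia.
have size_s : size s = (m - n).+1 by rewrite /= size_map size_iota.
apply: (eq_Uq_bracketings chiD _ _ F1 F2) => [[|i] lt_i|[|i] [|j] /andP [lt_ij lt_j]] //.
- by apply: hitemX_e_br; lia.
- by rewrite sS; [apply: hitemX_xitem | ]; lia.
- by rewrite sS; [apply: (skew_commute_e_br chiD far k1 q0 qN1 diag adj fork) | ]; lia.
- by rewrite !sS; [apply: (skew_commute_far_rev far) => [||[]] | | ]; lia.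
Qed.
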